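(* Let $p\ge\frac{3(2+\sqrt2)}{8}$. Then for all $r\in(0,1)$, $$\frac{K(1/2)}{2^{p-1}}\le r^pK(1-r)+(1-r)^pK(r)<\frac\pi2 .$$ For $p\in\big[\frac{3(2-\sqrt2)}{8},1\big]$ the inequalities are reversed: $\frac\pi2< r^pK(1-r)+(1-r)^pK(r)\le \frac{K(1/2)}{2^{p-1}}$ for all $r\in(0,1)$. Here $K(1/2)=\frac{\pi\sqrt\pi}{2\Gamma(3/4)^2}$.
   Context: $K(x)={\cal K}(\sqrt x)=\frac\pi2\,{}_2F_1(1/2,1/2;1;x)$ for $x\in[0,1)$, where ${\cal K}(r)=\int_0^{\pi/2}(1-r^2\sin^2t)^{-1/2}dt$ is the complete elliptic integral of the first kind. *)

From Stdlib Require Import Reals.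
From Coquelicot Require Import Coquelicot.
Open Scope R_scope.

Definition calK (r : R) : R :=
  RInt (fun t => / sqrt (1 - r ^ 2 * (sin t) ^ 2)) 0 (PI / 2).

Definition K (x : R) : R := calK (sqrt x).

Definition Fp (p r : R) : R :=
  Rpower r p * K (1 - r) + Rpower (1 - r) p * K r.

From Stdlib Require Import Reals Lra Lia.
From Coquelicot Require Import Coquelicot.
Open Scope R_scope.

(* With [Phi y := (1 - y) ^ p * (2 / PI) * K y] one has [Fp p r = PI / 2 * (Phi r + Phi (1 - r))].
   Writing [(2 / PI) * K] as the power series [sum (C(2n,n) / 4 ^ n) ^ 2 y ^ n], the second
   derivative of [Phi] is [(1 - y) ^ (p - 2)] times a power series whose coefficients all have
   the sign of [16 (n+1) (n+2) p^2 - 8 (2n+3) (n+2) p + 9]: nonnegative for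
   [p >= 3 (2 + sqrt 2) / 8] and nonpositive for [3 (2 - sqrt 2) / 8 <= p <= 1].  So [Phi] is
   convex, resp. concave, and then [r |-> Phi r + Phi (1 - r)] is monotone on [(0, 1/2]], with
   its extremum at [r = 1/2] and its value tending to (resp. staying above) [Phi 0 = 1] as
   [r -> 0], using [Phi (1 - s) <= s ^ (p - 1/2)]. *)

(* Coquelicot's generic operations on [R] hide the carrier from [ring] and [field]. *)
Ltac as_R_eq := match goal with |- ?a = ?b => change (@eq R a b) end.

Lemma is_derive_MVT (f df : R -> R) a b : a < b ->
  (forall c, a <= c <= b -> is_derive f c (df c)) ->
  exists c, a < c < b /\ f b - f a = df c * (b - a).
Proof.
  intros Hab Hd. destruct (MVT_cor2 f df a b Hab) as [c [E Hc]].
  - intros c Hc. apply is_derive_Reals, Hd, Hc.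
  - exists c. auto.
Qed.

Lemma is_derive_eq (f : R -> R) x l l' : is_derive f x l -> l = l' -> is_derive f x l'.
Proof. intros H <-. exact H. Qed.

Lemma is_derive_continuity_pt (f : R -> R) x l : is_derive f x l -> continuity_pt f x.
Proof.
  intros H. apply continuity_pt_filterlim.
  apply (ex_derive_continuous (K := R_AbsRing) (V := R_NormedModule)). exists l. exact H.
Qed.

Section SymmetricSum.

Variables f df ddf : R -> R.
Hypothesis f_deriv : forall y, 0 < y < 1 -> is_derive f y (df y).
Hypothesis df_deriv : forall y, 0 < y < 1 -> is_derive df y (ddf y).
Hypothesis ddf_pos : forall y, 0 < y < 1 -> 0 < ddf y.

Lemma df_strict_incr a b : 0 < a < b -> b < 1 -> df a < df b.
Proof.
  intros Ha Hb.
  destruct (is_derive_MVT df ddf a b) as [c [Hc E]]; [lra | intros c Hc; apply df_deriv; lra |].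
  pose proof (ddf_pos c ltac:(lra)). nra.
Qed.

Lemma sym_sum_strict_decr u v : 0 < u < v -> v <= 1 / 2 ->
  f v + f (1 - v) < f u + f (1 - u).
Proof.
  intros Hu Hv.
  destruct (is_derive_MVT (fun r => f r + f (1 - r)) (fun r => df r - df (1 - r)) u v)
    as [c [Hc E]]; [lra | |].
  - intros c Hc.
    assert (Hrefl : is_derive (fun r => f (1 - r)) c (- df (1 - c))).
    { eapply is_derive_eq.
      - apply (is_derive_comp f (fun r => 1 - r)); [apply f_deriv; lra |].
        auto_derive; auto.
      - unfold scal; simpl; unfold mult; simpl. ring. }
    exact (is_derive_plus _ _ _ _ _ (f_deriv c ltac:(lra)) Hrefl).
  - pose proof (df_strict_incr c (1 - c) ltac:(lra) ltac:(lra)). nra.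
Qed.

Lemma sym_sum_fold r : 0 < r < 1 ->
  exists r', 0 < r' <= 1 / 2 /\ f r + f (1 - r) = f r' + f (1 - r').
Proof.
  intros Hr. destruct (Rle_dec r (1 / 2)).
  - exists r. split; [lra | reflexivity].
  - exists (1 - r). split; [lra |]. replace (1 - (1 - r)) with r by ring. ring.
Qed.

Lemma sym_sum_ge_half r : 0 < r < 1 -> f (1 / 2) + f (1 - 1 / 2) <= f r + f (1 - r).
Proof.
  intros Hr. destruct (sym_sum_fold r Hr) as [r' [Hr' ->]].
  destruct (Req_dec r' (1 / 2)) as [-> | Hne]; [lra |].
  left. apply sym_sum_strict_decr; lra.
Qed.

(* A strictly decreasing function lies strictly below its [limsup] at the left end. *)
Lemma sym_sum_lt_boundary L :
  (forall eps, 0 < eps -> exists d, 0 < d /\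
     forall s, 0 < s < d -> f s + f (1 - s) <= L + eps) ->
  forall r, 0 < r < 1 -> f r + f (1 - r) < L.
Proof.
  intros Hbd r Hr. destruct (sym_sum_fold r Hr) as [r' [Hr' ->]].
  set (g := fun s => f s + f (1 - s)). change (g r' < L).
  assert (Hgap : g r' < g (r' / 2)) by (apply sym_sum_strict_decr; lra).
  destruct (Hbd ((g (r' / 2) - g r') / 2) ltac:(lra)) as [d [Hd Hs]].
  set (s := Rmin d (r' / 2) / 2).
  assert (Hs0 : 0 < s < d /\ s < r' / 2) by (unfold s, Rmin; destruct Rle_dec; lra).
  assert (Hgs : g (r' / 2) < g s) by (apply sym_sum_strict_decr; lra).
  specialize (Hs s ltac:(lra)). fold (g s) in Hs. lra.
Qed.

End SymmetricSum.

Lemma CV_radius_gt_of_bounded (a : nat -> R) x :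
  (forall n, Rabs (a n) <= 1) -> Rabs x < 1 -> Rbar_lt (Rabs x) (CV_radius a).
Proof.
  intros Ha Hx. apply Rbar_lt_le_trans with (y := Finite 1); [exact Hx |].
  apply (CV_radius_bounded a). exists 1. intro n. rewrite pow1, Rmult_1_r. auto.
Qed.

Lemma is_pseries_of_bounded (a : nat -> R) x :
  (forall n, Rabs (a n) <= 1) -> Rabs x < 1 -> is_pseries a x (PSeries a x).
Proof.
  intros Ha Hx. apply PSeries_correct, CV_radius_inside, CV_radius_gt_of_bounded; auto.
Qed.

Lemma is_pseries_lin (a b : nat -> R) x la lb u v :
  is_pseries a x la -> is_pseries b x lb ->
  is_pseries (fun n => u * a n + v * b n) x (u * la + v * lb).
Proof.
  intros Ha Hb. apply is_pseries_ext with (PS_plus (PS_scal u a) (PS_scal v b)); [reflexivity |].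
  apply (is_pseries_plus (K := R_AbsRing) (V := R_NormedModule));
    apply (is_pseries_scal (K := R_AbsRing) (V := R_NormedModule)); auto; apply Rmult_comm.
Qed.

Lemma is_pseries_shift (a : nat -> R) x l : is_pseries a x l ->
  is_pseries (fun n => match n with O => 0 | S m => a m end) x (x * l).
Proof.
  intros H. apply is_pseries_ext with (PS_incr_1 a); [intros [|n]; reflexivity |].
  exact (is_pseries_incr_1 (K := R_AbsRing) (V := R_NormedModule) a x l H).
Qed.

Lemma is_pseries_eq (a : nat -> R) x l l' : is_pseries a x l -> l = l' -> is_pseries a x l'.
Proof. intros H <-; exact H. Qed.

Lemma is_pseries_partial_sums (a : nat -> R) x l : is_pseries a x l ->
  is_lim_seq (sum_n (fun k => a k * x ^ k)) l.
Proof.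
  intros H. apply is_lim_seq_ext with (sum_n (fun k => scal (pow_n x k) (a k))); [| exact H].
  intros n. apply sum_n_ext. intros k. rewrite pow_n_pow. apply Rmult_comm.
Qed.

Lemma sum_n_le_S (c : nat -> R) n : (forall k, 0 <= c k) -> sum_n c n <= sum_n c (S n).
Proof. intros H. rewrite sum_Sn. pose proof (H (S n)). unfold plus; simpl. lra. Qed.

Lemma sum_n_le (a b : nat -> R) n : (forall k, a k <= b k) -> sum_n a n <= sum_n b n.
Proof.
  intros H. induction n; [rewrite !sum_O; auto |].
  rewrite !sum_Sn. pose proof (H (S n)). unfold plus; simpl. lra.
Qed.

Lemma is_pseries_ge_partial_sum (a : nat -> R) x l N :
  (forall n, 0 <= a n) -> 0 <= x -> is_pseries a x l ->
  sum_n (fun k => a k * x ^ k) N <= l.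
Proof.
  intros Ha Hx H. apply (is_lim_seq_incr_compare _ _ (is_pseries_partial_sums a x l H)).
  intros n. apply sum_n_le_S. intros k. apply Rmult_le_pos; [apply Ha | apply pow_le; exact Hx].
Qed.

Lemma is_pseries_pos (a : nat -> R) x l :
  (forall n, 0 <= a n) -> 0 < a 1%nat -> 0 < x -> is_pseries a x l -> 0 < l.
Proof.
  intros Ha Ha1 Hx H. pose proof (is_pseries_ge_partial_sum a x l 1 Ha ltac:(lra) H) as Hle.
  rewrite sum_Sn, sum_O in Hle. unfold plus in Hle; simpl in Hle.
  pose proof (Ha 0%nat). nra.
Qed.

Lemma partial_sum_tail_bound (c : nat -> R) (y l : R) N :
  (forall k, 0 <= c k <= y ^ k) -> 0 <= y < 1 -> is_lim_seq (sum_n c) l ->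
  sum_n c N <= l <= sum_n c N + y ^ S N / (1 - y).
Proof.
  intros Hc Hy Hl. split.
  - apply (is_lim_seq_incr_compare (sum_n c) l Hl). intros n. apply sum_n_le_S. apply Hc.
  - assert (Hm : forall m, sum_n c (m + N) <= sum_n c N + y ^ S N / (1 - y)).
    { assert (Hgeom : forall m, sum_n c (m + N) <= sum_n c N + y ^ S N * (1 - y ^ m) / (1 - y)).
      { induction m as [|m IH]; [simpl; unfold Rdiv; rewrite Rminus_diag; lra |].
        replace (S m + N)%nat with (S (m + N)) by lia. rewrite sum_Sn. unfold plus; simpl.
        destruct (Hc (S (m + N))) as [_ Hk].
        replace (y ^ S (m + N)) with (y ^ S N * y ^ m) in Hk by (rewrite <- pow_add; f_equal; lia).
        apply Rle_trans with (sum_n c N + y ^ S N * (1 - y ^ m) / (1 - y) + y ^ S N * y ^ m);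
          [lra | right; simpl; field; lra]. }
      intros m. eapply Rle_trans; [apply Hgeom |]. apply Rplus_le_compat_l.
      unfold Rdiv. apply Rmult_le_compat_r; [left; apply Rinv_0_lt_compat; lra |].
      pose proof (pow_le y m (proj1 Hy)). pose proof (pow_le y (S N) (proj1 Hy)).
      assert (0 <= y ^ S N * y ^ m) by (apply Rmult_le_pos; auto). nra. }
    exact (is_lim_seq_le _ _ _ _ Hm (proj1 (is_lim_seq_incr_n (sum_n c) N l) Hl)
             (is_lim_seq_const _)).
Qed.

(* [cb n] is the central binomial coefficient divided by [4 ^ n], i.e. the [n]-th Taylor
   coefficient of [(1 - x) ^ (-1/2)]; [kcoef n] is that of [(2 / PI) * K x]. *)
Fixpoint cb (n : nat) : R :=
  match n with O => 1 | S m => cb m * ((2 * INR m + 1) / (2 * INR m + 2)) end.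

Definition kcoef (n : nat) : R := cb n ^ 2.

Lemma cb_S n : cb (S n) = cb n * ((2 * INR n + 1) / (2 * INR n + 2)).
Proof. reflexivity. Qed.

Lemma cb_bounds n : 0 < cb n <= 1.
Proof.
  induction n as [|n IH]; simpl; [lra |]. pose proof (pos_INR n).
  assert (0 < (2 * INR n + 1) / (2 * INR n + 2) <= 1).
  { split; [apply Rdiv_lt_0_compat; lra |].
    apply Rmult_le_reg_r with (2 * INR n + 2); [lra |].
    unfold Rdiv; rewrite Rmult_assoc, Rinv_l; lra. }
  split; [apply Rmult_lt_0_compat | nra]; lra.
Qed.

Lemma kcoef_bounds n : 0 < kcoef n <= cb n.
Proof. unfold kcoef. pose proof (cb_bounds n). nra. Qed.

Lemma Rabs_cb_le_1 n : Rabs (cb n) <= 1.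
Proof. pose proof (cb_bounds n). rewrite Rabs_pos_eq; lra. Qed.

Lemma Rabs_kcoef_le_1 n : Rabs (kcoef n) <= 1.
Proof. pose proof (cb_bounds n). pose proof (kcoef_bounds n). rewrite Rabs_pos_eq; lra. Qed.

(* On coefficients this is [2 (n + 1) cb (n + 1) = (2 n + 1) cb n]. *)
Lemma PSeries_cb_ode x : Rabs x < 1 ->
  2 * (1 - x) * PSeries (PS_derive cb) x = PSeries cb x.
Proof.
  intros Hx.
  assert (H1 : is_pseries (PS_derive cb) x (PSeries (PS_derive cb) x)).
  { apply PSeries_correct, CV_radius_inside. rewrite CV_radius_derive.
    apply CV_radius_gt_of_bounded; [apply Rabs_cb_le_1 | exact Hx]. }
  assert (H0 := is_pseries_of_bounded cb x Rabs_cb_le_1 Hx).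
  assert (H := is_pseries_lin _ _ _ _ _ 1 (-1)
                 (is_pseries_lin _ _ _ _ _ 2 (-2) H1 (is_pseries_shift _ _ _ H1)) H0).
  apply is_pseries_ext with (b := fun _ => 0) in H.
  - apply is_pseries_unique in H. rewrite PSeries_const_0 in H. lra.
  - intros [|n]; unfold PS_derive.
    + simpl. as_R_eq. field.
    + rewrite !cb_S, !S_INR. pose proof (pos_INR n). as_R_eq. field. lra.
Qed.

(* [sqrt (1 - x) * PSeries cb x] has derivative [0] by the ODE and value [1] at [0]. *)
Lemma sqrt_1_minus_mul_PSeries_cb x : Rabs x < 1 -> sqrt (1 - x) * PSeries cb x = 1.
Proof.
  intros Hx. set (h := fun y => sqrt (1 - y) * PSeries cb y).
  assert (Hder : forall y, Rabs y < 1 -> is_derive h y 0).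
  { intros y Hy. pose proof (Rabs_def2 _ _ Hy) as Hy'.
    assert (Hs : is_derive (fun y => sqrt (1 - y)) y (-1 / (2 * sqrt (1 - y)))).
    { auto_derive; [lra |]. replace (1 + - y) with (1 - y) by ring. unfold Rdiv. ring. }
    assert (HP := is_derive_PSeries cb y (CV_radius_gt_of_bounded cb y Rabs_cb_le_1 Hy)).
    eapply is_derive_eq; [exact (is_derive_mult _ _ _ _ _ Hs HP Rmult_comm) |].
    assert (Hode := PSeries_cb_ode y Hy).
    assert (0 < sqrt (1 - y)) by (apply sqrt_lt_R0; lra).
    assert (sqrt (1 - y) * sqrt (1 - y) = 1 - y) by (apply sqrt_sqrt; lra).
    unfold plus, mult; simpl.
    apply Rmult_eq_reg_l with (2 * sqrt (1 - y)); [| lra].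
    field_simplify; [nra | lra]. }
  pose proof (Rabs_def2 _ _ Hx) as Hx'.
  assert (Hin : forall y, Rmin 0 x <= y <= Rmax 0 x -> Rabs y < 1).
  { intros y Hy. apply Rabs_def1; unfold Rmin, Rmax in Hy; destruct (Rle_dec 0 x); lra. }
  destruct (MVT_gen h 0 x (fun _ => 0)) as [c [_ E]].
  - intros y Hy. apply Hder, Hin. lra.
  - intros y Hy. apply is_derive_continuity_pt with 0. apply Hder, Hin, Hy.
  - assert (h 0 = 1) by (unfold h; rewrite PSeries_0, Rminus_0_r, sqrt_1; simpl; ring).
    unfold h in *. lra.
Qed.

Lemma inv_sqrt_1_minus_PSeries x : Rabs x < 1 -> / sqrt (1 - x) = PSeries cb x.
Proof.
  intros Hx. pose proof (sqrt_1_minus_mul_PSeries_cb x Hx) as E.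
  pose proof (Rabs_def2 _ _ Hx). assert (0 < sqrt (1 - x)) by (apply sqrt_lt_R0; lra).
  apply Rmult_eq_reg_l with (sqrt (1 - x)); [rewrite E; field |]; lra.
Qed.

Definition wallis (n : nat) : R := RInt (fun t => sin t ^ (2 * n)) 0 (PI / 2).

Lemma ex_RInt_sin_pow k a b : ex_RInt (fun t => sin t ^ k) a b.
Proof.
  apply (ex_RInt_continuous (V := R_CompleteNormedModule)). intros t _.
  apply (ex_derive_continuous (K := R_AbsRing) (V := R_NormedModule)). auto_derive. auto.
Qed.

(* Integrate the derivative of [sin ^ (2n+1) * cos] over [0, PI/2]. *)
Lemma wallis_S n : (2 * INR n + 2) * wallis (S n) = (2 * INR n + 1) * wallis n.
Proof.
  set (f := fun t => sin t ^ (2 * n + 1) * cos t).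
  set (df := fun t => (2 * INR n + 1) * sin t ^ (2 * n) - (2 * INR n + 2) * sin t ^ (2 * S n)).
  assert (H : is_RInt df 0 (PI / 2) (minus (f (PI / 2)) (f 0))).
  { apply (is_RInt_derive (V := R_CompleteNormedModule)).
    - intros x _. unfold f, df. auto_derive; [auto |].
      replace (n + (n + 0) + 1)%nat with (S (2 * n)) by lia.
      replace (2 * n + 1)%nat with (S (2 * n)) by lia.
      replace (2 * S n)%nat with (S (S (2 * n))) by lia.
      change (Init.Nat.pred (S (2 * n))) with (2 * n)%nat.
      rewrite S_INR, mult_INR. simpl pow. change (INR 2) with 2.
      pose proof (sin2_cos2 x) as Hpyth. unfold Rsqr in Hpyth.
      replace (cos x * cos x) with (1 - sin x * sin x) by lra. ring_simplify.
      replace (cos x ^ 2) with (1 - sin x ^ 2) by (simpl; lra). ring.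
    - intros x _. apply (ex_derive_continuous (K := R_AbsRing) (V := R_NormedModule)).
      unfold df. auto_derive. auto. }
  assert (Hf : minus (f (PI / 2)) (f 0) = 0).
  { unfold f, minus, plus, opp; simpl. rewrite cos_PI2, sin_0, pow_i by lia. as_R_eq. ring. }
  rewrite Hf in H.
  assert (H' := is_RInt_minus (V := R_CompleteNormedModule) _ _ _ _ _ _
    (is_RInt_scal (V := R_CompleteNormedModule) _ _ _ (2 * INR n + 1) _
       (RInt_correct (V := R_CompleteNormedModule) _ _ _ (ex_RInt_sin_pow (2 * n) 0 (PI / 2))))
    (is_RInt_scal (V := R_CompleteNormedModule) _ _ _ (2 * INR n + 2) _
       (RInt_correct (V := R_CompleteNormedModule) _ _ _ (ex_RInt_sin_pow (2 * S n) 0 (PI / 2))))).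
  unfold wallis.
  assert (E0 : (2 * INR n + 1) * RInt (fun t => sin t ^ (2 * n)) 0 (PI / 2)
               - (2 * INR n + 2) * RInt (fun t => sin t ^ (2 * S n)) 0 (PI / 2) = 0).
  { exact (eq_trans (eq_sym (is_RInt_unique _ _ _ _ H')) (is_RInt_unique _ _ _ _ H)). }
  lra.
Qed.

Lemma wallis_eq n : wallis n = PI / 2 * cb n.
Proof.
  induction n as [|n IH].
  - unfold wallis. simpl. rewrite RInt_const. unfold scal; simpl; unfold mult; simpl. ring.
  - pose proof (wallis_S n). pose proof (pos_INR n). rewrite cb_S.
    apply Rmult_eq_reg_l with (2 * INR n + 2); [| lra]. rewrite H, IH. field. lra.
Qed.

Lemma is_RInt_K_partial_sum y N :
  is_RInt (fun t => sum_n (fun k => cb k * (y * sin t ^ 2) ^ k) N) 0 (PI / 2)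
    (PI / 2 * sum_n (fun k => kcoef k * y ^ k) N).
Proof.
  assert (Hterm : forall k, is_RInt (fun t => cb k * (y * sin t ^ 2) ^ k) 0 (PI / 2)
                               (PI / 2 * (kcoef k * y ^ k))).
  { intros k.
    assert (H := is_RInt_scal (V := R_CompleteNormedModule) _ _ _ (cb k * y ^ k) _
      (RInt_correct (V := R_CompleteNormedModule) _ _ _ (ex_RInt_sin_pow (2 * k) 0 (PI / 2)))).
    fold (wallis k) in H. rewrite wallis_eq in H.
    replace (PI / 2 * (kcoef k * y ^ k)) with (scal (cb k * y ^ k) (PI / 2 * cb k))
      by (unfold scal, kcoef; simpl; unfold mult; simpl; ring).
    apply (is_RInt_ext (fun t => scal (cb k * y ^ k) (sin t ^ (2 * k)))); [| exact H].
    intros t _. rewrite Rpow_mult_distr, pow_mult. unfold scal; simpl; unfold mult; simpl. ring. }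
  induction N as [|N IH].
  - apply (is_RInt_ext (fun t => cb 0 * (y * sin t ^ 2) ^ 0)); [intros; rewrite sum_O; reflexivity |].
    rewrite sum_O. apply Hterm.
  - apply (is_RInt_ext (fun t => plus (sum_n (fun k => cb k * (y * sin t ^ 2) ^ k) N)
                                      (cb (S N) * (y * sin t ^ 2) ^ S N)));
      [intros; rewrite sum_Sn; reflexivity |].
    rewrite sum_Sn.
    replace (PI / 2 * plus (sum_n (fun k => kcoef k * y ^ k) N) (kcoef (S N) * y ^ S N))
      with (plus (PI / 2 * sum_n (fun k => kcoef k * y ^ k) N) (PI / 2 * (kcoef (S N) * y ^ S N)))
      by (unfold plus; simpl; ring).
    apply (is_RInt_plus (V := R_CompleteNormedModule)); [exact IH | apply Hterm].
Qed.

Lemma K_eq_RInt y : 0 <= y ->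
  K y = RInt (fun t => / sqrt (1 - y * sin t ^ 2)) 0 (PI / 2).
Proof.
  intros Hy. unfold K, calK. apply RInt_ext. intros t _. rewrite pow2_sqrt by lra. reflexivity.
Qed.

Lemma K_partial_sum_bounds y N : 0 <= y < 1 ->
  PI / 2 * sum_n (fun k => kcoef k * y ^ k) N <= K y <=
  PI / 2 * sum_n (fun k => kcoef k * y ^ k) N + PI / 2 * (y ^ S N / (1 - y)).
Proof.
  intros Hy. rewrite K_eq_RInt by lra.
  set (f := fun t => / sqrt (1 - y * sin t ^ 2)).
  set (P := fun t => sum_n (fun k => cb k * (y * sin t ^ 2) ^ k) N).
  assert (Hx : forall t, 0 <= y * sin t ^ 2 <= y).
  { intros t. pose proof (sin2_cos2 t) as Hpyth. unfold Rsqr in Hpyth. simpl. nra. }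
  assert (Hb : forall t, P t <= f t <= P t + y ^ S N / (1 - y)).
  { intros t. unfold f, P.
    assert (Hxt : Rabs (y * sin t ^ 2) < 1) by (pose proof (Hx t); rewrite Rabs_pos_eq; lra).
    rewrite inv_sqrt_1_minus_PSeries by exact Hxt.
    apply partial_sum_tail_bound; [| exact Hy |].
    - intros k. pose proof (cb_bounds k). pose proof (pow_le _ k (proj1 (Hx t))).
      assert ((y * sin t ^ 2) ^ k <= y ^ k) by (apply pow_incr; apply Hx).
      split; [apply Rmult_le_pos |]; nra.
    - apply is_pseries_partial_sums, is_pseries_of_bounded; [apply Rabs_cb_le_1 | exact Hxt]. }
  assert (Hf : ex_RInt f 0 (PI / 2)).
  { apply (ex_RInt_continuous (V := R_CompleteNormedModule)). intros t _.
    apply (ex_derive_continuous (K := R_AbsRing) (V := R_NormedModule)). unfold f.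
    pose proof (Hx t). auto_derive.
    repeat split; [lra | apply Rgt_not_eq, sqrt_lt_R0; lra]. }
  assert (HP := is_RInt_K_partial_sum y N). fold P in HP.
  assert (HPc := is_RInt_plus _ _ _ _ _ _ HP (is_RInt_const 0 (PI / 2) (y ^ S N / (1 - y)))).
  assert (HPI : 0 < PI / 2) by (pose proof PI_RGT_0; lra).
  split.
  - rewrite <- (is_RInt_unique _ _ _ _ HP).
    apply RInt_le; [lra | eexists; exact HP | exact Hf | intros t _; apply Hb].
  - apply Rle_trans with (RInt (fun t => P t + y ^ S N / (1 - y)) 0 (PI / 2)).
    + apply RInt_le; [lra | exact Hf | eexists; exact HPc | intros t _; apply Hb].
    + right. etransitivity; [exact (is_RInt_unique _ _ _ _ HPc) |].
      unfold plus, scal; simpl; unfold mult; simpl. ring.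
Qed.

Lemma K_eq_PSeries y : 0 <= y < 1 -> K y = PI / 2 * PSeries kcoef y.
Proof.
  intros Hy.
  assert (Hlim : is_lim_seq (fun N => PI / 2 * sum_n (fun k => kcoef k * y ^ k) N)
                   (PI / 2 * PSeries kcoef y)).
  { apply (is_lim_seq_scal_l _ (PI / 2) (PSeries kcoef y)).
    apply is_pseries_partial_sums, is_pseries_of_bounded;
      [apply Rabs_kcoef_le_1 | rewrite Rabs_pos_eq; lra]. }
  assert (Htail : is_lim_seq (fun N => PI / 2 * (y ^ S N / (1 - y))) 0).
  { replace 0 with (PI / 2 * (0 / (1 - y))) by (unfold Rdiv; ring).
    apply (is_lim_seq_scal_l _ (PI / 2) (0 / (1 - y))).
    apply (is_lim_seq_div' _ (fun _ => 1 - y)); [| apply is_lim_seq_const | lra].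
    apply (is_lim_seq_incr_1 (fun n => y ^ n)), is_lim_seq_geom. rewrite Rabs_pos_eq; lra. }
  assert (Hupper := is_lim_seq_plus' _ _ _ _ Hlim Htail). rewrite Rplus_0_r in Hupper.
  assert (Hsq := is_lim_seq_le_le _ (fun _ => K y) _ _ (fun N => K_partial_sum_bounds y N Hy)
                   Hlim Hupper).
  apply is_lim_seq_unique in Hsq. rewrite Lim_seq_const in Hsq. injection Hsq. auto.
Qed.

(* [Kser = (2 / PI) * K] on [[0, 1)], by [K_eq_PSeries]. *)
Definition Kser (y : R) : R := PSeries kcoef y.
Definition Kser' (y : R) : R := PSeries (PS_derive kcoef) y.
Definition Kser'' (y : R) : R := PSeries (PS_derive (PS_derive kcoef)) y.

Lemma CV_radius_kcoef y : Rabs y < 1 -> Rbar_lt (Rabs y) (CV_radius kcoef).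
Proof. intros Hy. apply CV_radius_gt_of_bounded; [apply Rabs_kcoef_le_1 | exact Hy]. Qed.

Lemma is_derive_Kser y : Rabs y < 1 -> is_derive Kser y (Kser' y).
Proof. intros Hy. apply is_derive_PSeries, CV_radius_kcoef, Hy. Qed.

Lemma is_derive_Kser' y : Rabs y < 1 -> is_derive Kser' y (Kser'' y).
Proof.
  intros Hy. apply is_derive_PSeries. rewrite CV_radius_derive. apply CV_radius_kcoef, Hy.
Qed.

Lemma is_derive_Rpower_1_minus q y : y < 1 ->
  is_derive (fun y => Rpower (1 - y) q) y (- (q * Rpower (1 - y) (q - 1))).
Proof.
  intros Hy. eapply is_derive_eq.
  - apply (is_derive_comp (fun x => Rpower x q) (fun y => 1 - y)).
    + apply is_derive_Reals, derivable_pt_lim_power. lra.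
    + auto_derive; auto.
  - unfold scal; simpl; unfold mult; simpl. ring.
Qed.

Lemma Rpower_plus_1 x q : 0 < x -> Rpower x (q + 1) = Rpower x q * x.
Proof. intros Hx. rewrite Rpower_plus, Rpower_1 by exact Hx. reflexivity. Qed.

Section Phi.

Variable p : R.

Definition Phi (y : R) : R := Rpower (1 - y) p * Kser y.

Definition Phi' (y : R) : R :=
  Rpower (1 - y) p * Kser' y - p * Rpower (1 - y) (p - 1) * Kser y.

(* [Phi'' y = (1 - y) ^ (p - 2) * phi2_factor y]. *)
Definition phi2_factor (y : R) : R :=
  p * (p - 1) * Kser y - 2 * p * (1 - y) * Kser' y + (1 - y) ^ 2 * Kser'' y.

Lemma is_derive_Phi y : Rabs y < 1 -> is_derive Phi y (Phi' y).
Proof.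
  intros Hy. pose proof (Rabs_def2 _ _ Hy).
  eapply is_derive_eq.
  - exact (is_derive_mult _ _ _ _ _
             (is_derive_Rpower_1_minus p y ltac:(lra)) (is_derive_Kser y Hy) Rmult_comm).
  - unfold Phi'. simpl. unfold plus, mult; simpl. ring.
Qed.

Lemma is_derive_Phi' y : Rabs y < 1 ->
  is_derive Phi' y (Rpower (1 - y) (p - 2) * phi2_factor y).
Proof.
  intros Hy. pose proof (Rabs_def2 _ _ Hy).
  assert (Hp := is_derive_mult _ _ _ _ _
                  (is_derive_Rpower_1_minus p y ltac:(lra)) (is_derive_Kser' y Hy) Rmult_comm).
  assert (Hp1 := is_derive_mult _ _ _ _ _
                   (is_derive_scal _ _ p _ (is_derive_Rpower_1_minus (p - 1) y ltac:(lra)))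
                   (is_derive_Kser y Hy) Rmult_comm).
  eapply is_derive_eq; [exact (is_derive_minus _ _ _ _ _ Hp Hp1) |].
  assert (E1 : Rpower (1 - y) (p - 1) = Rpower (1 - y) (p - 2) * (1 - y)).
  { rewrite <- Rpower_plus_1 by lra. f_equal. ring. }
  assert (E0 : Rpower (1 - y) p = Rpower (1 - y) (p - 2) * (1 - y) ^ 2).
  { replace p with (p - 2 + 1 + 1) at 1 by ring. rewrite !Rpower_plus_1 by lra. ring. }
  unfold phi2_factor. simpl. unfold minus, plus, opp, mult; simpl.
  replace (p - 1 - 1) with (p - 2) by ring. rewrite E1, E0. as_R_eq. ring.
Qed.

Definition phi2_coef (n : nat) : R :=
  p ^ 2 - p * (2 * INR n + 3) / (2 * INR n + 2) + 9 / (16 * (INR n + 1) * (INR n + 2)).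

Lemma is_pseries_phi2_factor y : Rabs y < 1 ->
  is_pseries (fun n => kcoef n * phi2_coef n) y (phi2_factor y).
Proof.
  intros Hy.
  assert (H0 : is_pseries kcoef y (Kser y))
    by apply PSeries_correct, CV_radius_inside, CV_radius_kcoef, Hy.
  assert (H1 : is_pseries (PS_derive kcoef) y (Kser' y)).
  { apply PSeries_correct, CV_radius_inside. rewrite CV_radius_derive. apply CV_radius_kcoef, Hy. }
  assert (H2 : is_pseries (PS_derive (PS_derive kcoef)) y (Kser'' y)).
  { apply PSeries_correct, CV_radius_inside. rewrite !CV_radius_derive.
    apply CV_radius_kcoef, Hy. }
  assert (H2s := is_pseries_shift _ _ _ H2).
  assert (H := is_pseries_lin _ _ _ _ _ 1 1
    (is_pseries_lin _ _ _ _ _ 1 (-2)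
      (is_pseries_lin _ _ _ _ _ 1 1
        (is_pseries_lin _ _ _ _ _ 1 (2 * p)
          (is_pseries_lin _ _ _ _ _ (p * (p - 1)) (-2 * p) H0 H1)
          (is_pseries_shift _ _ _ H1))
        H2)
      H2s)
    (is_pseries_shift _ _ _ H2s)).
  eapply is_pseries_eq; [apply is_pseries_ext with (2 := H) | unfold phi2_factor; as_R_eq; ring].
  intros n. unfold PS_derive, kcoef, phi2_coef.
  destruct n as [|[|m]]; cbv iota beta; rewrite !cb_S, !S_INR.
  - simpl. as_R_eq. field.
  - simpl. as_R_eq. field.
  - pose proof (pos_INR m). as_R_eq. field. repeat split; lra.
Qed.

End Phi.

Definition phi2_num (p m : R) : R :=
  16 * (m + 1) * (m + 2) * p ^ 2 - 8 * (2 * m + 3) * (m + 2) * p + 9.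

Lemma phi2_coef_eq p n :
  phi2_coef p n = phi2_num p (INR n) / (16 * (INR n + 1) * (INR n + 2)).
Proof. unfold phi2_coef, phi2_num. pose proof (pos_INR n). field. lra. Qed.

(* The two thresholds of the theorem are the roots of the leading part (the [m = 0] term). *)
Lemma phi2_num_split p m : phi2_num p m =
  16 * (m + 1) * (m + 2) * ((p - 3 * (2 + sqrt 2) / 8) * (p - 3 * (2 - sqrt 2) / 8))
  + m * (8 * (m + 2) * p - 9 * (m + 3) / 2).
Proof.
  assert (Hs : sqrt 2 * sqrt 2 = 2) by (apply sqrt_sqrt; lra).
  assert (Hroots : (p - 3 * (2 + sqrt 2) / 8) * (p - 3 * (2 - sqrt 2) / 8)
                   = p ^ 2 - 3 * p / 2 + 9 / 32) by nra.
  rewrite Hroots. unfold phi2_num. field.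
Qed.

Lemma sqrt_2_bounds : 1.41 < sqrt 2 < 1.42.
Proof.
  assert (Hs : sqrt 2 * sqrt 2 = 2) by (apply sqrt_sqrt; lra).
  pose proof (sqrt_pos 2). split; nra.
Qed.

Lemma phi2_num_pos p m : 3 * (2 + sqrt 2) / 8 <= p -> 0 <= m ->
  0 <= phi2_num p m /\ (0 < m -> 0 < phi2_num p m).
Proof.
  intros Hp Hm. pose proof sqrt_2_bounds. rewrite phi2_num_split.
  assert (0 <= (p - 3 * (2 + sqrt 2) / 8) * (p - 3 * (2 - sqrt 2) / 8))
    by (apply Rmult_le_pos; lra).
  assert (0 < 8 * (m + 2) * p - 9 * (m + 3) / 2) by nra.
  assert (0 <= 16 * (m + 1) * (m + 2)) by nra.
  split; [| intros]; nra.
Qed.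

(* [phi2_num] is convex in [p], and for [m > 0] negative at both ends [p0] and [1]. *)
Lemma phi2_num_neg p m : 3 * (2 - sqrt 2) / 8 <= p <= 1 -> 0 <= m ->
  phi2_num p m <= 0 /\ (0 < m -> phi2_num p m < 0).
Proof.
  intros Hp Hm0. pose proof sqrt_2_bounds.
  set (p0 := 3 * (2 - sqrt 2) / 8) in *.
  assert (Hp0 : 0.2 < p0 < 0.23) by (unfold p0; lra).
  assert (Hstrict : 0 < m -> phi2_num p m < 0).
  { intros Hm.
    assert (N0 : phi2_num p0 m < 0).
    { rewrite phi2_num_split. fold p0. replace (p0 - p0) with 0 by ring. nra. }
    assert (N1 : phi2_num 1 m < 0) by (unfold phi2_num; nra).
    assert (Hconv : phi2_num p m * (1 - p0) = (1 - p) * phi2_num p0 m + (p - p0) * phi2_num 1 m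
                    - 16 * (m + 1) * (m + 2) * ((p - p0) * (1 - p)) * (1 - p0))
      by (unfold phi2_num; ring).
    assert (0 <= 16 * (m + 1) * (m + 2) * ((p - p0) * (1 - p))).
    { apply Rmult_le_pos; [nra | apply Rmult_le_pos; lra]. }
    assert ((1 - p) * phi2_num p0 m + (p - p0) * phi2_num 1 m < 0).
    { destruct (Req_dec p 1) as [-> | Hne]; [nra |].
      assert ((1 - p) * phi2_num p0 m < 0) by (apply Rmult_pos_neg; lra). nra. }
    nra. }
  split; [| exact Hstrict].
  destruct (Req_dec m 0) as [-> | Hne]; [| left; apply Hstrict; lra].
  rewrite phi2_num_split. fold p0.
  assert ((p - 3 * (2 + sqrt 2) / 8) * (p - p0) <= 0) by (apply Rmult_le_0_r; lra). nra.
Qed.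

Lemma phi2_factor_pos p y : 3 * (2 + sqrt 2) / 8 <= p -> 0 < y < 1 -> 0 < phi2_factor p y.
Proof.
  intros Hp Hy.
  assert (Hcoef : forall n, 0 <= phi2_coef p n /\ ((1 <= n)%nat -> 0 < phi2_coef p n)).
  { intros n. rewrite phi2_coef_eq. pose proof (pos_INR n).
    assert (0 < 16 * (INR n + 1) * (INR n + 2)) by nra.
    destruct (phi2_num_pos p (INR n) Hp ltac:(lra)) as [Hnn Hpos].
    split; [apply Rdiv_le_0_compat; lra |].
    intros Hn. apply Rdiv_lt_0_compat; [apply Hpos, lt_0_INR; lia | lra]. }
  apply (is_pseries_pos (fun n => kcoef n * phi2_coef p n) y); [| | lra |].
  - intros n. apply Rmult_le_pos; [apply Rlt_le, kcoef_bounds | apply Hcoef].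
  - apply Rmult_lt_0_compat; [apply kcoef_bounds | apply Hcoef; lia].
  - apply is_pseries_phi2_factor. rewrite Rabs_pos_eq; lra.
Qed.

Lemma phi2_factor_neg p y : 3 * (2 - sqrt 2) / 8 <= p <= 1 -> 0 < y < 1 -> phi2_factor p y < 0.
Proof.
  intros Hp Hy.
  assert (Hcoef : forall n, 0 <= - phi2_coef p n /\ ((1 <= n)%nat -> 0 < - phi2_coef p n)).
  { intros n. rewrite phi2_coef_eq. pose proof (pos_INR n).
    assert (0 < 16 * (INR n + 1) * (INR n + 2)) by nra.
    destruct (phi2_num_neg p (INR n) Hp ltac:(lra)) as [Hnp Hneg].
    unfold Rdiv.
    assert (0 < / (16 * (INR n + 1) * (INR n + 2))) by (apply Rinv_0_lt_compat; lra).
    split; [nra |].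
    intros Hn. assert (phi2_num p (INR n) < 0) by (apply Hneg, lt_0_INR; lia). nra. }
  assert (Hopp := is_pseries_opp (K := R_AbsRing) (V := R_NormedModule) _ _ _
                    (is_pseries_phi2_factor p y ltac:(rewrite Rabs_pos_eq; lra))).
  cut (0 < - phi2_factor p y); [lra |].
  apply (is_pseries_pos (PS_opp (fun n => kcoef n * phi2_coef p n)) y); [| | lra | exact Hopp];
    unfold PS_opp; simpl; unfold opp; simpl.
  - intros n. pose proof (kcoef_bounds n). pose proof (proj1 (Hcoef n)). nra.
  - pose proof (kcoef_bounds 1). pose proof (proj2 (Hcoef 1%nat) ltac:(lia)). nra.
Qed.

Lemma Rpower_1_base q : Rpower 1 q = 1.
Proof. unfold Rpower. rewrite ln_1, Rmult_0_r. apply exp_0. Qed.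

Lemma Rpower_lt_of_lt_root q e s : 0 < q -> 0 < e -> 0 < s < Rpower e (/ q) -> Rpower s q < e.
Proof.
  intros Hq He Hs. eapply Rlt_le_trans; [apply Rlt_Rpower_l; [exact Hq | exact Hs] |].
  rewrite Rpower_mult, Rinv_l, Rpower_1 by lra. lra.
Qed.

Lemma Kser_ge_1 y : 0 <= y < 1 -> 1 <= Kser y.
Proof.
  intros Hy. pose proof (is_pseries_ge_partial_sum kcoef y (Kser y) 0
    (fun n => Rlt_le _ _ (proj1 (kcoef_bounds n))) (proj1 Hy)
    (is_pseries_of_bounded kcoef y Rabs_kcoef_le_1 ltac:(rewrite Rabs_pos_eq; lra))) as H.
  rewrite sum_O in H. unfold kcoef in H. simpl in H. lra.
Qed.

Lemma Kser_le_inv_sqrt y : 0 <= y < 1 -> Kser y <= / sqrt (1 - y).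
Proof.
  intros Hy. assert (Hy' : Rabs y < 1) by (rewrite Rabs_pos_eq; lra).
  rewrite inv_sqrt_1_minus_PSeries by exact Hy'.
  refine (is_lim_seq_le _ _ _ _ _
    (is_pseries_partial_sums _ _ _ (is_pseries_of_bounded kcoef y Rabs_kcoef_le_1 Hy'))
    (is_pseries_partial_sums _ _ _ (is_pseries_of_bounded cb y Rabs_cb_le_1 Hy'))).
  intros n. apply sum_n_le. intros k.
  apply Rmult_le_compat_r; [apply pow_le, Hy | apply kcoef_bounds].
Qed.

Section PhiBoundary.

Variable p : R.

Lemma Phi_nonneg y : 0 <= y < 1 -> 0 <= Phi p y.
Proof.
  intros Hy. unfold Phi. pose proof (Kser_ge_1 y Hy). pose proof (exp_pos (p * ln (1 - y))).
  unfold Rpower. nra.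
Qed.

Lemma Phi_0 : Phi p 0 = 1.
Proof.
  unfold Phi, Kser. rewrite PSeries_0, Rminus_0_r, Rpower_1_base. unfold kcoef. simpl. ring.
Qed.

Lemma Phi_near_0 eps : 0 < eps ->
  exists d, 0 < d /\ forall s, 0 < s < d -> Rabs (Phi p s - 1) < eps.
Proof.
  intros He.
  assert (Hc := is_derive_continuity_pt _ _ _ (is_derive_Phi p 0 ltac:(rewrite Rabs_R0; lra))).
  destruct (Hc eps He) as [d [Hd Hx]]. exists d. split; [lra |].
  intros s Hs. specialize (Hx s). simpl in Hx. unfold R_dist in Hx.
  rewrite <- Phi_0. apply Hx. split; [split; [constructor | lra] |].
  rewrite Rminus_0_r, Rabs_pos_eq; lra.
Qed.

(* [Kser] grows at most like [(1 - y) ^ (-1/2)] near [1]. *)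
Lemma Phi_1_minus_le s : 0 < s < 1 -> Phi p (1 - s) <= Rpower s (p - / 2).
Proof.
  intros Hs. unfold Phi. replace (1 - (1 - s)) with s by ring.
  assert (H := Kser_le_inv_sqrt (1 - s) ltac:(lra)). replace (1 - (1 - s)) with s in H by ring.
  replace (p - / 2) with (p + - / 2) by ring.
  rewrite Rpower_plus, Rpower_Ropp, Rpower_sqrt by lra.
  apply Rmult_le_compat_l; [left; apply exp_pos | exact H].
Qed.

Lemma Phi_sym_sum_upper_near_0 : 1 / 2 < p -> forall eps, 0 < eps ->
  exists d, 0 < d /\ forall s, 0 < s < d -> Phi p s + Phi p (1 - s) <= 1 + eps.
Proof.
  intros Hp eps He. destruct (Phi_near_0 (eps / 2) ltac:(lra)) as [d [Hd Hnear]].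
  set (d' := Rmin 1 (Rmin d (Rpower (eps / 2) (/ (p - / 2))))).
  assert (Hd' : 0 < d') by (unfold d'; repeat apply Rmin_pos; [lra | lra | apply exp_pos]).
  exists d'. split; [exact Hd' |]. intros s Hs.
  assert (Hsd : s < 1 /\ s < d /\ s < Rpower (eps / 2) (/ (p - / 2))).
  { unfold d', Rmin in Hs. repeat destruct Rle_dec; lra. }
  pose proof (Rabs_def2 _ _ (Hnear s ltac:(lra))).
  pose proof (Phi_1_minus_le s ltac:(lra)).
  pose proof (Rpower_lt_of_lt_root (p - / 2) (eps / 2) s ltac:(lra) ltac:(lra) ltac:(lra)).
  lra.
Qed.

Lemma Phi_sym_sum_lower_near_0 eps : 0 < eps ->
  exists d, 0 < d /\ forall s, 0 < s < d -> - Phi p s + - Phi p (1 - s) <= - 1 + eps.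
Proof.
  intros He. destruct (Phi_near_0 eps He) as [d [Hd Hnear]].
  exists (Rmin 1 d). split; [apply Rmin_pos; lra |]. intros s Hs.
  assert (Hsd : s < 1 /\ s < d) by (unfold Rmin in Hs; destruct Rle_dec; lra).
  pose proof (Rabs_def2 _ _ (Hnear s ltac:(lra))).
  pose proof (Phi_nonneg (1 - s) ltac:(lra)).
  lra.
Qed.

End PhiBoundary.

Lemma Phi_sym_sum_bounds_convex p : 3 * (2 + sqrt 2) / 8 <= p -> forall r, 0 < r < 1 ->
  Phi p (1 / 2) + Phi p (1 - 1 / 2) <= Phi p r + Phi p (1 - r) < 1.
Proof.
  intros Hp r Hr. pose proof sqrt_2_bounds.
  assert (Hd : forall y, 0 < y < 1 -> is_derive (Phi p) y (Phi' p y))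
    by (intros y Hy; apply is_derive_Phi; rewrite Rabs_pos_eq; lra).
  assert (Hdd : forall y, 0 < y < 1 ->
                  is_derive (Phi' p) y (Rpower (1 - y) (p - 2) * phi2_factor p y))
    by (intros y Hy; apply is_derive_Phi'; rewrite Rabs_pos_eq; lra).
  assert (Hconvex : forall y, 0 < y < 1 -> 0 < Rpower (1 - y) (p - 2) * phi2_factor p y)
    by (intros y Hy; apply Rmult_lt_0_compat; [apply exp_pos | apply phi2_factor_pos; lra]).
  split.
  - exact (sym_sum_ge_half _ _ _ Hd Hdd Hconvex r Hr).
  - exact (sym_sum_lt_boundary _ _ _ Hd Hdd Hconvex 1
             (Phi_sym_sum_upper_near_0 p ltac:(lra)) r Hr).
Qed.

Lemma Phi_sym_sum_bounds_concave p : 3 * (2 - sqrt 2) / 8 <= p <= 1 -> forall r, 0 < r < 1 ->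
  1 < Phi p r + Phi p (1 - r) <= Phi p (1 / 2) + Phi p (1 - 1 / 2).
Proof.
  intros Hp r Hr.
  assert (Hd : forall y, 0 < y < 1 -> is_derive (fun y => - Phi p y) y (- Phi' p y)).
  { intros y Hy. apply (is_derive_opp (Phi p)), is_derive_Phi. rewrite Rabs_pos_eq; lra. }
  assert (Hdd : forall y, 0 < y < 1 -> is_derive (fun y => - Phi' p y) y
                  (- (Rpower (1 - y) (p - 2) * phi2_factor p y))).
  { intros y Hy. apply (is_derive_opp (Phi' p)), is_derive_Phi'. rewrite Rabs_pos_eq; lra. }
  assert (Hconvex : forall y, 0 < y < 1 -> 0 < - (Rpower (1 - y) (p - 2) * phi2_factor p y)).
  { intros y Hy. pose proof (exp_pos ((p - 2) * ln (1 - y))).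
    pose proof (phi2_factor_neg p y Hp Hy). unfold Rpower. nra. }
  pose proof (sym_sum_ge_half _ _ _ Hd Hdd Hconvex r Hr).
  pose proof (sym_sum_lt_boundary _ _ _ Hd Hdd Hconvex (-1) (Phi_sym_sum_lower_near_0 p) r Hr).
  cbv beta in *. lra.
Qed.

Lemma Fp_eq p r : 0 < r < 1 -> Fp p r = PI / 2 * (Phi p r + Phi p (1 - r)).
Proof.
  intros Hr. unfold Fp, Phi, Kser. rewrite !K_eq_PSeries by lra.
  replace (1 - (1 - r)) with r by ring. ring.
Qed.

Lemma K_half_div_eq p : K (1 / 2) / Rpower 2 (p - 1) = PI / 2 * (Phi p (1 / 2) + Phi p (1 - 1 / 2)).
Proof.
  rewrite K_eq_PSeries by lra. replace (1 - 1 / 2) with (1 / 2) by field.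
  unfold Phi, Kser. replace (1 - 1 / 2) with (/ 2) by field.
  assert (Hhalf : Rpower (/ 2) p = / Rpower 2 p).
  { unfold Rpower. rewrite ln_Rinv, <- exp_Ropp by lra. f_equal. ring. }
  assert (Hpred : Rpower 2 (p - 1) = Rpower 2 p / 2).
  { replace (p - 1) with (p + - (1)) by ring. rewrite Rpower_plus, Rpower_Ropp, Rpower_1 by lra.
    reflexivity. }
  rewrite Hhalf, Hpred. replace (1 / 2) with (/ 2) by field.
  pose proof (exp_pos (p * ln 2)). fold (Rpower 2 p) in H. field. lra.
Qed.

Theorem mainTheorem13 (p : R) :
  (3 * (2 + sqrt 2) / 8 <= p ->
     forall r : R, 0 < r < 1 ->
       K (1 / 2) / Rpower 2 (p - 1) <= Fp p r /\ Fp p r < PI / 2) /\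
  (3 * (2 - sqrt 2) / 8 <= p <= 1 ->
     forall r : R, 0 < r < 1 ->
       PI / 2 < Fp p r /\ Fp p r <= K (1 / 2) / Rpower 2 (p - 1)).
Proof.
  pose proof PI_RGT_0. rewrite K_half_div_eq. split.
  - intros Hp r Hr. rewrite Fp_eq by exact Hr.
    pose proof (Phi_sym_sum_bounds_convex p Hp r Hr). split; nra.
  - intros Hp r Hr. rewrite Fp_eq by exact Hr.
    pose proof (Phi_sym_sum_bounds_concave p Hp r Hr). split; nra.
Qed.
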